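(* Let $(S,d)$ be a metric space with at least two points. If $f\in\operatorname{ext}(B^S_{\mathrm{FM}})$, then $\|f\|_\infty=1$. If $f\in\operatorname{ext}_*(B^S_{\mathrm{FM}})$, then also $|f|_L=1$.
   Context: $\mathrm{BL}(S)$ is the space of bounded real-valued Lipschitz functions on $S$, $|f|_L=\sup_{x\neq y}|f(x)-f(y)|/d(x,y)$, $\|f\|_{\mathrm{FM}}=\max(\|f\|_\infty,|f|_L)$, $B^S_{\mathrm{FM}}=\{f\in\mathrm{BL}(S):\|f\|_{\mathrm{FM}}\le1\}$, $\operatorname{ext}$ denotes extreme points, and $\operatorname{ext}_*(B^S_{\mathrm{FM}})=\operatorname{ext}(B^S_{\mathrm{FM}})\setminus\{f\in B^S_{\mathrm{FM}}:|f|=\mathbf{1}\}$. *)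

From HB Require Import structures.
From mathcomp Require Import all_boot all_order all_algebra.
From mathcomp Require Import boolp classical_sets reals.
Set Implicit Arguments. Unset Strict Implicit. Unset Printing Implicit Defensive.
Import Order.TTheory GRing.Theory Num.Theory.
Local Open Scope ring_scope.
Local Open Scope classical_set_scope.

Section BL.
Variables (R : realType) (S : Type) (d : S -> S -> R).

Definition is_metric : Prop :=
  (forall x y, 0 <= d x y) /\
  (forall x y, d x y = 0 <-> x = y) /\
  (forall x y, d x y = d y x) /\
  (forall x y z, d x z <= d x y + d y z).

Definition is_BL (f : S -> R) : Prop :=
  (exists M : R, forall x, `|f x| <= M) /\
  (exists L : R, forall x y, `|f x - f y| <= L * d x y).

Definition supnorm (f : S -> R) : R := sup [set `|f x| | x in [set: S]].

Definition lipconst (f : S -> R) : R :=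
  sup [set r | exists x y, x <> y /\ r = `|f x - f y| / d x y].

Definition FMnorm (f : S -> R) : R := Num.max (supnorm f) (lipconst f).

Definition BFM (f : S -> R) : Prop := is_BL f /\ FMnorm f <= 1.

Definition is_ext (f : S -> R) : Prop :=
  BFM f /\
  forall (g h : S -> R) (t : R), BFM g -> BFM h -> 0 < t < 1 ->
    f = (fun x => t * g x + (1 - t) * h x) -> g = h.

Definition is_ext_star (f : S -> R) : Prop :=
  is_ext f /\ ~ (forall x, `|f x| = 1).

End BL.

From HB Require Import structures.
From mathcomp Require Import all_boot all_order all_algebra.
From mathcomp Require Import boolp reals.
From mathcomp Require Import lra ring.
Set Implicit Arguments. Unset Strict Implicit. Unset Printing Implicit Defensive.
Import Order.TTheory GRing.Theory Num.Theory.
Local Open Scope ring_scope.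

(* An extreme point f is not the midpoint of f + p and f - p unless p = 0, and
   f + p, f - p stay in the unit ball as soon as |f| + |p| <= 1 pointwise and p
   is (1 - |f|_L)-Lipschitz.  If ||f||_oo < 1, the constant 1 - ||f||_oo is such
   a perturbation.  If moreover |f x1| < 1 and |f|_L < 1, so is the tent
   (1 - |f|_L) max(0, a - d(., x1)) with a = 1 - |f x1|: within distance a of
   x1, |f| is at most |f x1| + |f|_L d(., x1), which leaves room for the tent. *)

Lemma max0_subr_lipschitz (R : realDomainType) (a u v : R) :
  `|Num.max 0 (a - u) - Num.max 0 (a - v)| <= `|u - v|.
Proof.
have [hu|hu] := leP 0 (a - u); have [hv|hv] := leP 0 (a - v);
  rewrite ?(max_r hu) ?(max_r hv) ?(max_l (ltW hu)) ?(max_l (ltW hv));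
  have [huv|huv] := leP 0 (u - v); rewrite ?(ger0_norm huv) ?(ltr0_norm huv);
  rewrite ler_norml; apply/andP; split; lra.
Qed.

Section ExtremePointsFM.
Variables (R : realType) (S : Type) (d : S -> S -> R).
Hypothesis hd : is_metric d.
Hypothesis htwo : exists x y : S, x <> y.

Lemma metric_ge0 x y : 0 <= d x y.
Proof. by case: hd. Qed.

Lemma metric_xx x : d x x = 0.
Proof. by case: hd => _ [dE _]; apply/dE. Qed.

Lemma metric_gt0 x y : x <> y -> 0 < d x y.
Proof.
case: hd => _ [dE _] nxy; rewrite lt_neqAle metric_ge0 andbT.
by apply/eqP => /esym /dE.
Qed.

Lemma metric_dist_lipschitz x y z : `|d x z - d y z| <= d x y.
Proof.
case: hd => _ [_ [dS dT]]; have := dT x y z; have := dT y x z.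
rewrite (dS y x) ler_norml => ? ?; apply/andP; split; lra.
Qed.

Lemma supnorm_le (f : S -> R) c : (forall x, `|f x| <= c) -> supnorm f <= c.
Proof.
move=> hf; case: htwo => x _; apply: ge_sup; first by exists `|f x|, x.
by move=> _ [z _ <-].
Qed.

Lemma supnorm_ge (f : S -> R) x : is_BL d f -> `|f x| <= supnorm f.
Proof.
move=> [[M hM] _]; apply: ub_le_sup; last by exists x.
by exists M => _ [z _ <-].
Qed.

Lemma lipconst_le (f : S -> R) c :
  (forall x y, `|f x - f y| <= c * d x y) -> lipconst d f <= c.
Proof.
move=> hf; case: htwo => x [y nxy]; apply: ge_sup.
  by exists (`|f x - f y| / d x y), x, y.
by move=> _ [u [v [nuv ->]]]; rewrite ler_pdivrMr ?metric_gt0.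
Qed.

Lemma lipconst_ge (f : S -> R) x y :
  is_BL d f -> `|f x - f y| <= lipconst d f * d x y.
Proof.
move=> [_ [L hL]]; have [<-|nxy] := pselect (x = y).
  by rewrite subrr normr0 metric_xx mulr0.
rewrite -ler_pdivrMr ?metric_gt0 //; apply: ub_le_sup; last by exists x, y.
by exists L => _ [u [v [nuv ->]]]; rewrite ler_pdivrMr ?metric_gt0.
Qed.

Lemma lipconst_ge0 (f : S -> R) : is_BL d f -> 0 <= lipconst d f.
Proof.
move=> hf; case: htwo => x [y nxy].
have := le_trans (normr_ge0 _) (lipconst_ge x y hf).
by rewrite pmulr_lge0 ?metric_gt0.
Qed.

Lemma BFMP (f : S -> R) :
  (forall x, `|f x| <= 1) -> (forall x y, `|f x - f y| <= d x y) -> BFM d f.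
Proof.
move=> h1 h2; split; first by split; [exists 1 | exists 1 => x y; rewrite mul1r].
by rewrite ge_max supnorm_le // lipconst_le // => x y; rewrite mul1r.
Qed.

Lemma BFM_supnorm (f : S -> R) : BFM d f -> supnorm f <= 1.
Proof. by case=> _; rewrite ge_max => /andP[]. Qed.

Lemma BFM_lipconst (f : S -> R) : BFM d f -> lipconst d f <= 1.
Proof. by case=> _; rewrite ge_max => /andP[]. Qed.

Lemma BFM_addr (f p : S -> R) : BFM d f ->
  (forall x, `|f x| + `|p x| <= 1) ->
  (forall x y, `|p x - p y| <= (1 - lipconst d f) * d x y) ->
  BFM d (fun x => f x + p x).
Proof.
move=> [hBL _] hbound hlip; apply: BFMP => [x|x y].
  exact: le_trans (ler_normD _ _) (hbound x).
have -> : f x + p x - (f y + p y) = (f x - f y) + (p x - p y) by ring.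
apply: le_trans (ler_normD _ _) _; have := lipconst_ge x y hBL.
have := hlip x y; lra.
Qed.

Lemma ext_midpoint_eq (f g h : S -> R) : is_ext d f -> BFM d g -> BFM d h ->
  f = (fun x => 2^-1 * (g x + h x)) -> g = h.
Proof.
move=> [_ hext] hg hh fE; apply: (hext g h 2^-1) => //.
  by rewrite invr_gt0 ltr0n invf_lt1 ?ltr0n // ltr1n.
by rewrite fE; apply: funext => x; field.
Qed.

Lemma ext_perturbation_eq0 (f p : S -> R) : is_ext d f ->
  (forall x, `|f x| + `|p x| <= 1) ->
  (forall x y, `|p x - p y| <= (1 - lipconst d f) * d x y) ->
  forall x, p x = 0.
Proof.
move=> hf hbound hlip x; have hB := proj1 hf.
have hBp := BFM_addr hB hbound hlip.
have hBm : BFM d (fun x => f x + - p x).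
  by apply: BFM_addr => // [y|y z]; rewrite ?normrN // -opprD normrN.
have fE : f = (fun x => 2^-1 * ((f x + p x) + (f x - p x))).
  by apply: funext => y; field.
have /(congr1 (fun g => g x)) /= := ext_midpoint_eq hf hBp hBm fE; lra.
Qed.

Lemma ext_supnorm (f : S -> R) : is_ext d f -> supnorm f = 1.
Proof.
move=> hf; have [[hBL _] _] := hf; have hB := proj1 hf.
apply/eqP; rewrite eq_le BFM_supnorm //= leNgt; apply/negP => hlt.
case: htwo => x0 _.
have hc : `|1 - supnorm f| = 1 - supnorm f by rewrite ger0_norm // subr_ge0 ltW.
have hbound x : `|f x| + `|1 - supnorm f| <= 1.
  by rewrite hc; have := supnorm_ge x hBL; lra.
have hlip (x y : S) : `|(1 - supnorm f) - (1 - supnorm f)| <= (1 - lipconst d f) * d x y.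
  by rewrite subrr normr0 mulr_ge0 ?metric_ge0 // subr_ge0 BFM_lipconst.
have := ext_perturbation_eq0 (p := fun=> 1 - supnorm f) hf hbound hlip x0.
by move=> /eqP; rewrite subr_eq0 eq_sym lt_eqF.
Qed.

Definition tent (c r : R) (x1 x : S) : R := c * Num.max 0 (r - d x x1).

Lemma tent_ge0 c r x1 x : 0 <= c -> 0 <= tent c r x1 x.
Proof. by move=> hc; rewrite mulr_ge0 // le_max lexx. Qed.

Lemma tent_center c r x1 : 0 <= r -> tent c r x1 x1 = c * r.
Proof. by move=> hr; rewrite /tent metric_xx subr0 max_r. Qed.

Lemma tent_lipschitz c r x1 x y :
  0 <= c -> `|tent c r x1 x - tent c r x1 y| <= c * d x y.
Proof.
move=> hc; rewrite /tent -mulrBr normrM (ger0_norm hc) ler_wpM2l //.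
exact: le_trans (max0_subr_lipschitz _ _ _) (metric_dist_lipschitz _ _ _).
Qed.

Lemma BFM_tent_bound (f : S -> R) x1 x : BFM d f ->
  `|f x| + `|tent (1 - lipconst d f) (1 - `|f x1|) x1 x| <= 1.
Proof.
move=> hB; have [hBL _] := hB.
have hc : 0 <= 1 - lipconst d f by rewrite subr_ge0 BFM_lipconst.
have hsup : `|f x| <= 1 by apply: le_trans (supnorm_ge x hBL) (BFM_supnorm hB).
rewrite (ger0_norm (tent_ge0 _ _ _ hc)) /tent.
have [hnear|hfar] := leP 0 (1 - `|f x1| - d x x1); last by rewrite mulr0 addr0.
have hL := lipconst_ge x x1 hBL; have hL0 := lipconst_ge0 hBL.
have hT : `|f x| <= `|f x - f x1| + `|f x1|.
  by have := ler_normD (f x - f x1) (f x1); rewrite subrK.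
have := metric_ge0 x x1; move: hnear hc; nra.
Qed.

Lemma ext_star_lipconst (f : S -> R) : is_ext_star d f -> lipconst d f = 1.
Proof.
move=> [hf hnot1]; have hB := proj1 hf.
apply/eqP; rewrite eq_le BFM_lipconst //= leNgt; apply/negP => hlt.
have [x1 hx1] : exists x1, `|f x1| != 1.
  apply: contrapT => hall; apply: hnot1 => x; apply/eqP/negPn/negP => hx.
  by apply: hall; exists x.
have hlt1 : `|f x1| < 1.
  by rewrite lt_neqAle hx1 -(ext_supnorm hf) supnorm_ge //; case: hB.
have hc : 0 <= 1 - lipconst d f by rewrite subr_ge0 ltW.
have := ext_perturbation_eq0 hf (fun x => BFM_tent_bound x1 x hB)
  (fun x y => tent_lipschitz _ x1 x y hc) x1.
by apply/eqP; rewrite tent_center ?subr_ge0 ?ltW // mulf_neq0 // subr_eq0 gt_eqF.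
Qed.

End ExtremePointsFM.

Theorem lemma3p2 (R : realType) (S : Type) (d : S -> S -> R)
  (hd : is_metric d) (htwo : exists x y : S, x <> y) (f : S -> R) :
  (is_ext d f -> supnorm f = 1) /\
  (is_ext_star d f -> supnorm f = 1 /\ lipconst d f = 1).
Proof.
split; first exact: ext_supnorm.
move=> hf; split; last exact: ext_star_lipconst.
exact: ext_supnorm (proj1 hf).
Qed.
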